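(* Let $p$ be a prime, $q=p^e$, and let $T:\mathbb{F}_q\to U$ be the Teichmüller lift. Let $M_0=(T(a)^r)_{r\in[0,q-1],\,a\in\mathbb{F}_q}$ be the $q\times q$ matrix over $\mathbb{Z}_p[\xi_{q-1}]$ whose rows are indexed by $r\in\{0,1,\dots,q-1\}$ and columns by $a\in\mathbb{F}_q$ (with the convention $T(0)^0=1$, so the row $r=0$ consists of all ones), and let $\boldsymbol{M}=M_0^{\otimes k}$ be its $k$-th Kronecker (tensor) power, a $q^k\times q^k$ matrix. Then for every vector $x\in\mathbb{Q}_p(\xi_{p(q-1)})^{q^k}$, setting $y=\boldsymbol{M}x$, we have $\nu_p(y)=\nu_p(x)$.
   Context: $\xi_m$ denotes a primitive $m$-th root of unity in $\mathbb{C}_p$ (the completion of an algebraic closure of $\mathbb{Q}_p$). The ring $\mathbb{Z}_p[\xi_{q-1}]$ has maximal ideal $(p)$ and residue field identified with $\mathbb{F}_q$; $U$ is the set of roots of $X^q-X$ in $\mathbb{Z}_p[\xi_{q-1}]$ (the $(q-1)$-st roots of unity together with $0$), and the Teichmüller lift $T:\mathbb{F}_q\to U$ is the inverse of the reduction bijection $U\to\mathbb{F}_q$ (so $T(0)=0$). $\nu_p$ is the $p$-adic valuation on $\mathbb{Q}_p$ extended to $\mathbb{Q}_p(\xi_{p(q-1)})$ (values in $\frac{1}{p-1}\mathbb{Z}\cup\{\infty\}$, $\nu_p(0)=\infty$). For a vector $x=(x_1,\dots,x_n)$, $\nu_p(x)=\min_i\nu_p(x_i)$. *)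

From HB Require Import structures.
From mathcomp Require Import all_boot all_order all_algebra all_field.
From mathcomp Require Import constructive_ereal.
From mathcomp Require Export mxtens.

Set Implicit Arguments.
Unset Strict Implicit.
Unset Printing Implicit Defensive.

Import Order.TTheory GRing.Theory Num.Theory.
Local Open Scope ereal_scope.
Local Open Scope ring_scope.

Definition is_valuation (K : fieldType) (nu : K -> \bar rat) : Prop :=
  [/\ forall x : K, (nu x == +oo)%E = (x == 0),
      forall x : K, (nu x != -oo)%E,
      forall x y : K, nu (x * y) = (nu x + nu y)%E
    & forall x y : K, (Order.min (nu x) (nu y) <= nu (x + y)%R)%E].

(* nu extends the p-adic valuation nu_p of Q: normalised by nu p = 1. *)
Definition extends_nu_p (K : fieldType) (p : nat) (nu : K -> \bar rat) : Prop :=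
  nu p%:R = 1%:E.

(* red : K -> F restricted to the valuation ring {x | nu x >= 0} is a
   surjective ring morphism onto F whose kernel is the maximal ideal
   {x | nu x > 0}: i.e. F is identified with the residue field. *)
Definition is_reduction (K : fieldType) (F : finFieldType)
    (nu : K -> \bar rat) (red : K -> F) : Prop :=
  [/\ forall x y : K, (0 <= nu x)%E -> (0 <= nu y)%E -> red (x + y) = red x + red y,
      forall x y : K, (0 <= nu x)%E -> (0 <= nu y)%E -> red (x * y) = red x * red y,
      red 1 = 1,
      forall x : K, (0 <= nu x)%E -> (red x == 0) = (0 < nu x)%E
    & forall a : F, exists2 x : K, (0 <= nu x)%E & red x = a].

(* T is the Teichmüller lift F_q -> U: T a is an element of
   U = {roots of X^q - X} (q = #|F|) lying in the valuation ring and reducing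
   to a (this determines T uniquely; in particular T 0 = 0). *)
Definition is_teichmuller (K : fieldType) (F : finFieldType)
    (nu : K -> \bar rat) (red : K -> F) (T : F -> K) : Prop :=
  forall a : F, [/\ T a ^+ #|F| = T a, (0 <= nu (T a))%E & red (T a) = a].

(* The q x q matrix M_0 = (T(a)^r)_{r in [0,q-1], a in F_q}; row r : 'I_q,
   the columns are indexed by F via its canonical enumeration enum_val.
   The convention T(0)^0 = 1 holds since x ^+ 0 = 1. *)
Definition M0 (K : fieldType) (F : finFieldType) (T : F -> K) :
    'M[K]_(#|F|, #|F|) :=
  \matrix_(r < #|F|, j < #|F|) T (enum_val (j : 'I_#|{: F}|)) ^+ r.

Definition nu_vec (K : fieldType) (nu : K -> \bar rat) (n : nat)
    (x : 'cV[K]_n) : \bar rat :=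
  \big[Order.min/+oo%E]_(i < n) nu (x i ord0).

From HB Require Import structures.
From mathcomp Require Import all_boot all_order all_algebra all_field.
From mathcomp Require Import constructive_ereal mxtens.
From mathcomp Require Import lra.

(* M0 is the Vandermonde matrix of the lifts T a.  Distinct elements of F
   have distinct reductions, so each difference T a - T b is a unit of the
   valuation ring; hence det M0 is a unit and M0^-1 = adj M0 / det M0 has
   integral entries.  Kronecker powers preserve integrality and inverses, and
   a matrix A such that A and A^-1 are both integral preserves the valuation
   of vectors: nu (A x) >= nu x and nu x = nu (A^-1 (A x)) >= nu (A x). *)

Set Implicit Arguments.
Unset Strict Implicit.

Import Order.TTheory GRing.Theory Num.Theory.
Local Open Scope ereal_scope.
Local Open Scope ring_scope.

Lemma tensmx11 (R : comPzRingType) m n :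
  (1%:M : 'M[R]_m) *t (1%:M : 'M[R]_n) = 1%:M.
Proof.
apply/matrixP => i j.
case: (mxtens_indexP i) => [a b]; case: (mxtens_indexP j) => [c d].
rewrite tensmxE !mxE (can_eq (@mxtens_indexK _ _)) xpair_eqE.
by case: (a == c); case: (b == d); rewrite ?mulr1 ?mulr0 ?mul0r.
Qed.

Lemma ntensmx_mul (R : comPzRingType) n (A B : 'M[R]_n) k :
  A ^t k *m B ^t k = (A *m B) ^t k.
Proof.
case: k => [|k]; first by rewrite !ntensmx0 mulmx1.
by elim: k => [|k IH] //; rewrite !ntensmxSS tensmx_mul IH.
Qed.

Lemma ntensmx_id (R : comPzRingType) n k : (1%:M : 'M[R]_n) ^t k = 1%:M.
Proof.
case: k => [|k]; first by rewrite ntensmx0.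
by elim: k => [|k IH] //; rewrite ntensmxSS IH tensmx11.
Qed.

Section Valuation.
Variables (K : fieldType) (nu : K -> \bar rat).
Hypothesis nu_val : is_valuation nu.

Lemma nu0 : nu 0 = +oo%E.
Proof. by case: nu_val => nu_eqoo _ _ _; apply/eqP; rewrite nu_eqoo. Qed.

Lemma nu_finite x : x != 0 -> exists r : rat, nu x = r%:E.
Proof.
case: nu_val => nu_eqoo nu_neqNoo _ _ x_neq0.
case Ex: (nu x) => [r| |]; first by exists r.
- by move: (nu_eqoo x); rewrite Ex eqxx (negbTE x_neq0).
- by move: (nu_neqNoo x); rewrite Ex.
Qed.

Lemma nuM x y : nu (x * y) = (nu x + nu y)%E.
Proof. by case: nu_val. Qed.

Lemma nuD x y : (Order.min (nu x) (nu y) <= nu (x + y))%E.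
Proof. by case: nu_val. Qed.

Lemma nu1 : nu 1 = 0%E.
Proof.
have [r nu1E] := nu_finite (oner_neq0 K).
have /eqP := nuM 1 1; rewrite mulr1 nu1E -EFinD eqe => /eqP r_eq.
by have -> : r = 0 by lra.
Qed.

Lemma nuN1 : nu (-1) = 0%E.
Proof.
have [r nuN1E] : exists r : rat, nu (-1) = r%:E.
  by apply: nu_finite; rewrite oppr_eq0 oner_neq0.
have /eqP := nuM (-1) (-1).
rewrite mulrNN mulr1 nu1 nuN1E -EFinD eqe => /eqP r_eq.
by have -> : r = 0 by lra.
Qed.

Lemma nuN x : nu (- x) = nu x.
Proof. by rewrite -mulN1r nuM nuN1 add0e. Qed.

Lemma nu_signr n : nu ((-1) ^+ n) = 0%E.
Proof.
by elim: n => [|n IH]; rewrite ?expr0 ?nu1 // exprS nuM nuN1 IH adde0.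
Qed.

Lemma nuV_eq0 x : nu x = 0%E -> nu x^-1 = 0%E.
Proof.
move=> nux0; have x_neq0 : x != 0 by apply: contraPneq nux0 => ->; rewrite nu0.
by have := nuM x x^-1; rewrite mulfV // nu1 nux0 add0e.
Qed.

Lemma nu_sum_ge (I : Type) (r : seq I) (P : pred I) (G : I -> K) c :
  (forall i, P i -> c <= nu (G i))%E -> (c <= nu (\sum_(i <- r | P i) G i))%E.
Proof.
move=> G_ge; elim/big_ind: _ => //; first by rewrite nu0 leey.
by move=> x y cx cy; apply: le_trans (nuD x y); rewrite le_min cx cy.
Qed.

Lemma nu_prod_ge0 (I : Type) (r : seq I) (P : pred I) (G : I -> K) :
  (forall i, P i -> 0 <= nu (G i))%E -> (0 <= nu (\prod_(i <- r | P i) G i))%E.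
Proof.
move=> G_ge0; elim/big_ind: _ => //; first by rewrite nu1.
by move=> x y x_ge0 y_ge0; rewrite nuM adde_ge0.
Qed.

Lemma nu_prod_eq0 (I : Type) (r : seq I) (P : pred I) (G : I -> K) :
  (forall i, P i -> nu (G i) = 0%E) -> nu (\prod_(i <- r | P i) G i) = 0%E.
Proof.
move=> G_eq0; elim/big_ind: _ => //; first by rewrite nu1.
by move=> x y nux0 nuy0; rewrite nuM nux0 nuy0 adde0.
Qed.

Definition integral_mx m n (A : 'M[K]_(m, n)) :=
  forall i j, (0 <= nu (A i j))%E.

Lemma integral_mx1 n : integral_mx (1%:M : 'M[K]_n).
Proof. by move=> i j; rewrite mxE; case: (i == j); rewrite ?nu1 ?nu0 ?leey. Qed.

Lemma integral_tensmx m n p q (A : 'M[K]_(m, n)) (B : 'M[K]_(p, q)) :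
  integral_mx A -> integral_mx B -> integral_mx (A *t B).
Proof. by move=> intA intB i j; rewrite mxE nuM adde_ge0. Qed.

Lemma integral_ntensmx n (A : 'M[K]_n) k :
  integral_mx A -> integral_mx (A ^t k).
Proof.
move=> intA; case: k => [|k]; first exact: integral_mx1.
by elim: k => [|k IH] //; rewrite ntensmxSS; apply: integral_tensmx.
Qed.

Lemma nu_det_ge0 n (A : 'M[K]_n) : integral_mx A -> (0 <= nu (\det A))%E.
Proof.
move=> intA; apply: nu_sum_ge => s _.
by rewrite nuM nu_signr add0e; apply: nu_prod_ge0.
Qed.

Lemma unitmx_nu_det n (A : 'M[K]_n) : nu (\det A) = 0%E -> A \in unitmx.
Proof.
move=> nu_det0; rewrite unitmxE unitfE.
by apply: contraPneq nu_det0 => ->; rewrite nu0.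
Qed.

Lemma integral_invmx n (A : 'M[K]_n) :
  integral_mx A -> nu (\det A) = 0%E -> integral_mx (invmx A).
Proof.
move=> intA nu_det0 i j.
rewrite /invmx unitmx_nu_det // !mxE nuM nuV_eq0 // add0e.
rewrite /cofactor nuM nu_signr add0e; apply: nu_det_ge0 => a b.
by rewrite !mxE.
Qed.

Lemma nu_vec_ge n (x : 'cV[K]_n) c :
  (c <= nu_vec nu x)%E <-> forall i, (c <= nu (x i ord0))%E.
Proof.
split=> [x_ge i | x_ge]; first exact: le_trans x_ge (bigmin_le _ _ _).
by apply: le_bigmin => //; apply: leey.
Qed.

Lemma nu_vec_mulmx_ge m n (A : 'M[K]_(m, n)) x :
  integral_mx A -> (nu_vec nu x <= nu_vec nu (A *m x))%E.
Proof.
move=> intA; apply/nu_vec_ge => i; rewrite mxE; apply: nu_sum_ge => j _.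
rewrite nuM; apply: le_trans (leeDr _ (intA i j)).
by move: (le_refl (nu_vec nu x)) => /nu_vec_ge.
Qed.

Lemma nu_vec_mulmx n (A B : 'M[K]_n) x :
  integral_mx A -> integral_mx B -> B *m A = 1%:M ->
  nu_vec nu (A *m x) = nu_vec nu x.
Proof.
move=> intA intB BA1; apply: le_anti; rewrite nu_vec_mulmx_ge // andbT.
by rewrite -{2}[x]mul1mx -BA1 -mulmxA nu_vec_mulmx_ge.
Qed.

End Valuation.

Section Reduction.
Variables (K : fieldType) (nu : K -> \bar rat).
Variables (F : finFieldType) (red : K -> F).
Hypotheses (nu_val : is_valuation nu) (red_res : is_reduction nu red).

Lemma red0 : red 0 = 0.
Proof.
case: red_res => _ _ _ red_eq0 _.
by apply/eqP; rewrite red_eq0 (nu0 nu_val) ?ltey.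
Qed.

Lemma nu_sub_red_neq x y : (0 <= nu x)%E -> (0 <= nu y)%E -> red x != red y ->
  nu (x - y) = 0%E.
Proof.
case: red_res => redD _ _ red_eq0 _ x_ge0 y_ge0 neq_xy.
have Ny_ge0 : (0 <= nu (- y))%E by rewrite (nuN nu_val).
have redN : red (- y) = - red y.
  by apply/eqP; rewrite -addr_eq0 addrC -redD // subrr red0.
have sub_ge0 : (0 <= nu (x - y))%E.
  by apply: le_trans (nuD nu_val _ _); rewrite le_min x_ge0 Ny_ge0.
have : red (x - y) != 0 by rewrite redD // redN subr_eq0.
by rewrite red_eq0 // -leNgt => sub_le0; apply: le_anti; rewrite sub_le0.
Qed.

Variable T : F -> K.
Hypothesis T_lift : is_teichmuller nu red T.

Lemma M0_Vandermonde :
  M0 T = Vandermonde #|F| (\row_j T (enum_val (j : 'I_#|{: F}|))).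
Proof. by apply/matrixP => i j; rewrite !mxE. Qed.

Lemma integral_M0 : integral_mx nu (M0 T).
Proof.
move=> i j; rewrite mxE; have [_ T_ge0 _] := T_lift (enum_val j).
elim: (nat_of_ord i) => [|r IH]; first by rewrite (nu1 nu_val).
by rewrite exprS (nuM nu_val) adde_ge0.
Qed.

Lemma nu_det_M0 : nu (\det (M0 T)) = 0%E.
Proof.
rewrite M0_Vandermonde det_Vandermonde.
apply: (nu_prod_eq0 nu_val) => i _; apply: (nu_prod_eq0 nu_val) => j lt_ij.
rewrite !mxE.
have [_ Tj_ge0 redTj] := T_lift (enum_val j).
have [_ Ti_ge0 redTi] := T_lift (enum_val i).
apply: nu_sub_red_neq => //; rewrite redTj redTi.
by apply: contraTneq lt_ij => /enum_val_inj->; rewrite ltnn.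
Qed.

End Reduction.

Theorem lemma2p3 (p e k : nat) (K : fieldType) (nu : K -> \bar rat)
    (F : finFieldType) (red : K -> F) (T : F -> K) :
  prime p -> (0 < e)%N -> #|F| = (p ^ e)%N ->
  is_valuation nu -> extends_nu_p p nu ->
  is_reduction nu red -> is_teichmuller nu red T ->
  forall x : 'cV[K]_(#|F| ^ k),
    nu_vec nu (ntensmx (M0 T) k *m x) = nu_vec nu x.
Proof.
move=> _ _ _ nu_val _ red_res T_lift x.
have intM0 := integral_M0 nu_val T_lift.
have nu_det := nu_det_M0 nu_val red_res T_lift.
apply: (nu_vec_mulmx nu_val (B := invmx (M0 T) ^t k)).
- exact: integral_ntensmx.
- exact: integral_ntensmx (integral_invmx nu_val intM0 nu_det).
- by rewrite ntensmx_mul mulVmx ?ntensmx_id // (unitmx_nu_det nu_val).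
Qed.
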